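(* Let $S\subseteq 2^E$ be a powerful set with $|E|=n$ and $r_S(E)=n-1$. Then there is at most one element $e\in E$ with $r_S(\{e\})\neq 1$.
   Context: A set $S\subseteq 2^E$ ($E$ finite) is powerful if for every $X\subseteq E$ the number of members of $S$ contained in $X$ is a power of 2. Its rank function is $r_S(X)=\log_2\big(|S|/|\{Y\in S:Y\subseteq E\setminus X\}|\big)$. The order of $S$ is $|E|$ and the rank of $S$ is $r_S(E)$. *)

From mathcomp Require Import all_boot.
Set Implicit Arguments. Unset Strict Implicit. Unset Printing Implicit Defensive.

(* Ground set E is a finite type T; a family S ⊆ 2^E is a {set {set T}}. *)

Definition count_below (T : finType) (S : {set {set T}}) (X : {set T}) : nat :=
  #|[set Y in S | Y \subset X]|.

Definition powerful (T : finType) (S : {set {set T}}) : Prop :=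
  forall X : {set T}, exists k : nat, count_below S X = 2 ^ k.

(* r_S(X) = log2 (|S| / |{Y in S : Y ⊆ E \ X}|).  For powerful S both counts are
   powers of 2 (with the second dividing... being at most the first), so this equals
   log2 |S| - log2 |{Y in S : Y ⊆ E\X}|, with log2 computed exactly by trunc_log 2. *)
Definition rankS (T : finType) (S : {set {set T}}) (X : {set T}) : nat :=
  trunc_log 2 #|S| - trunc_log 2 (count_below S (~: X)).

From mathcomp Require Import all_boot.
From mathcomp Require Import zify.

Set Implicit Arguments.
Unset Strict Implicit.
Unset Printing Implicit Defensive.

(* Since set0 lies in S and r_S(E) = n - 1, |S| = 2^(n-1) = 2m with m = 2^(n-2).
   If r_S({e}) <> 1, the number c_e of members avoiding e is a power of 2 other
   than m, hence c_e = 2m or 4 c_e <= 2m.  Split S into the four cells given by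
   membership of e and f; each cell has at most m members (they are determined
   by their trace off {e, f}), and the cell avoiding both contains set0.  Both
   alternatives for c_e and c_f then contradict |S| = 2m. *)

Section CountBelow.

Variables (T : finType) (S : {set {set T}}).

Lemma count_belowT : count_below S [set: T] = #|S|.
Proof. by apply: eq_card => Y; rewrite !inE subsetT andbT. Qed.

Lemma count_below_le (X : {set T}) : count_below S X <= #|S|.
Proof. by apply: subset_leq_card; apply/subsetP => Y; rewrite inE => /andP[]. Qed.

Lemma count_below_setC1 (g : T) :
  count_below S (~: [set g]) = #|[set Y in S | g \notin Y]|.
Proof. by apply: eq_card => Y; rewrite !inE subsetC sub1set inE. Qed.

Hypothesis powS : powerful S.

Lemma powerful_card_exp2 : #|S| = 2 ^ trunc_log 2 #|S|.
Proof. by have [k] := powS setT; rewrite count_belowT => ->; rewrite trunc_expnK. Qed.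

(* count_below S set0 is a power of 2, hence nonzero. *)
Lemma powerful_set0 : set0 \in S.
Proof.
have [k hk] := powS set0.
have : 0 < count_below S set0 by rewrite hk expn_gt0.
by rewrite card_gt0 => /set0Pn[Y]; rewrite !inE subset0 => /andP[SY /eqP <-].
Qed.

Lemma count_below0 : count_below S set0 = 1.
Proof.
rewrite -(cards1 (set0 : {set T})); apply: eq_card => Y.
by rewrite !inE subset0; case: eqP => [->|]; rewrite ?powerful_set0 ?andbF.
Qed.

Lemma rankST : rankS S [set: T] = trunc_log 2 #|S|.
Proof. by rewrite /rankS setCT count_below0 trunc_log1 subn0. Qed.

(* Both counts are powers of 2, so r_S(X) <> 1 means their exponents differ
   by 0 or by at least 2. *)
Lemma rankS_neq1 (X : {set T}) : rankS S X != 1 ->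
  count_below S (~: X) = #|S| \/ 4 * count_below S (~: X) <= #|S|.
Proof.
have [k hk] := powS (~: X); have [j hj] := powS setT.
rewrite count_belowT in hj.
have : 2 ^ k <= 2 ^ j by rewrite -hk -hj count_below_le.
rewrite /rankS hk hj leq_exp2l // !trunc_expnK // => le_kj ne1.
have [->|ne_kj] := eqVneq k j; first by left.
by right; rewrite -(expnD 2 2) leq_exp2l //; lia.
Qed.

End CountBelow.

Lemma card_agree_le (T : finType) (A : {set T}) (P : {set {set T}}) :
  {in P &, forall Y Z, Y :&: A = Z :&: A} -> #|P| <= 2 ^ #|~: A|.
Proof.
move=> agree; have inj : {in P &, injective (fun Y => Y :\: A)}.
  by move=> Y Z PY PZ eqD; rewrite -(setID Y A) -(setID Z A) (agree Y Z) ?eqD.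
rewrite -(card_in_imset inj) -card_powerset; apply: subset_leq_card.
by apply/subsetP => _ /imsetP[Y _ ->]; rewrite powersetE setDE subsetIr.
Qed.

Section Cells.

Variables (T : finType) (S : {set {set T}}) (e f : T).

Definition cell (a b : bool) := [set Y in S | (e \in Y == a) && (f \in Y == b)].

Lemma card_cell_le a b : e != f -> #|cell a b| <= 2 ^ (#|T| - 2).
Proof.
move=> ef; have := cardsC [set e; f]; rewrite cards2 ef => cardC.
rewrite -cardC addKn; apply: card_agree_le => Y Z.
rewrite !inE => /andP[_ /andP[/eqP Ye /eqP Yf]] /andP[_ /andP[/eqP Ze /eqP Zf]].
apply/setP => x; rewrite !inE.
by case: (eqVneq x e) => [->|_]; [rewrite Ye Ze | case: (eqVneq x f) => [->|_]];
   rewrite ?Yf ?Zf ?andbF.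
Qed.

Lemma cell00_gt0 : set0 \in S -> 0 < #|cell false false|.
Proof. by move=> S0; apply/card_gt0P; exists set0; rewrite !inE S0. Qed.

Lemma card_avoid_first :
  #|[set Y in S | e \notin Y]| = #|cell false false| + #|cell false true|.
Proof.
rewrite -(cardsID [set Y : {set T} | f \in Y] [set Y in S | e \notin Y]) addnC.
by congr (_ + _); apply: eq_card => Y; rewrite !inE;
   case: (Y \in S); case: (e \in Y); case: (f \in Y).
Qed.

Lemma card_avoid_second :
  #|[set Y in S | f \notin Y]| = #|cell false false| + #|cell true false|.
Proof.
rewrite -(cardsID [set Y : {set T} | e \in Y] [set Y in S | f \notin Y]) addnC.
by congr (_ + _); apply: eq_card => Y; rewrite !inE;
   case: (Y \in S); case: (e \in Y); case: (f \in Y).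
Qed.

Lemma card_cells : #|S| =
  #|cell false false| + #|cell false true| + #|cell true false| + #|cell true true|.
Proof.
rewrite -card_avoid_first -addnA -(cardsID [set Y : {set T} | e \in Y] S) addnC.
rewrite -(cardsID [set Y : {set T} | f \in Y] (S :&: _)) [X in _ + X]addnC.
by congr (_ + (_ + _)); apply: eq_card => Y; rewrite !inE;
   case: (Y \in S); case: (e \in Y); case: (f \in Y).
Qed.

End Cells.

Theorem lemma1 (T : finType) (n : nat) (S : {set {set T}}) :
  #|T| = n -> powerful S -> rankS S [set: T] = n - 1 ->
  forall e f : T, rankS S [set e] != 1 -> rankS S [set f] != 1 -> e = f.
Proof.
move=> <- powS rST e f re rf; apply/eqP/negP => /negP ef.
have two_le_T : 2 <= #|T| by have := max_card [set e; f]; rewrite cards2 ef.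
have cardS : #|S| = 2 * 2 ^ (#|T| - 2).
  by rewrite (powerful_card_exp2 powS) -(rankST powS) rST -expnS; congr (2 ^ _); lia.
have := rankS_neq1 powS re; have := rankS_neq1 powS rf.
rewrite !count_below_setC1 (card_avoid_first S e f) (card_avoid_second S e f).
have := card_cells S e f; have := cell00_gt0 e f (powerful_set0 powS).
have := card_cell_le S false false ef; have := card_cell_le S false true ef.
have := card_cell_le S true false ef; have := card_cell_le S true true ef.
have : 0 < 2 ^ (#|T| - 2) by rewrite expn_gt0.
lia.
Qed.
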